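(* Let $\Omega\subseteq\mathbb{C}$ be a domain and let $d_\Omega$ be a distance on $\Omega$ which is continuous as a function $\Omega\times\Omega\to[0,\infty)$ (with respect to the Euclidean topology) and inner. Then the topology induced by $d_\Omega$ coincides with the Euclidean topology on $\Omega$.
   Context: Fix an integer $n\ge0$. A $C^n$-path from $x$ to $y$ in $\Omega$ is a continuous map $\gamma:[0,1]\to\Omega$, $n$ times differentiable on $(0,1)$, with $\gamma(0)=x$, $\gamma(1)=y$; a piecewise $C^n$-path is a finite concatenation of such paths. For a distance $d_\Omega$ on $\Omega$ and a path $\gamma$, its length is $L_{d_\Omega}(\gamma)=\sup_\delta\sum_{j=1}^k d_\Omega(\gamma(t_{j-1}),\gamma(t_j))$, the supremum over all partitions $\delta=\{0=t_0<t_1<\dots<t_k=1\}$. The inner pseudodistance is $d_\Omega^{i}(x,y)=\inf L_{d_\Omega}(\gamma)$ over piecewise $C^n$-paths $\gamma$ from $x$ to $y$; always $d_\Omega\le d^i_\Omega$, and $d_\Omega$ is called inner if $d_\Omega=d_\Omega^i$. *)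

(* classical reals. The complex plane C is modelled as R*R. *)
From Stdlib Require Import Reals List.
Open Scope R_scope.

Definition pt := (R * R)%type.

Definition edist (p q : pt) : R :=
  sqrt ((fst p - fst q) ^ 2 + (snd p - snd q) ^ 2).

Definition eopen (U : pt -> Prop) : Prop :=
  forall x, U x -> exists r, 0 < r /\ forall y, edist x y < r -> U y.

Definition connected (O : pt -> Prop) : Prop :=
  forall U V : pt -> Prop, eopen U -> eopen V ->
    (forall x, O x -> U x \/ V x) ->
    (forall x, O x -> U x -> V x -> False) ->
    (forall x, O x -> ~ U x) \/ (forall x, O x -> ~ V x).

Definition domain (O : pt -> Prop) : Prop :=
  (exists x, O x) /\ eopen O /\ connected O.

Definition is_distance (O : pt -> Prop) (d : pt -> pt -> R) : Prop :=
  (forall x y, O x -> O y -> 0 <= d x y) /\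
  (forall x y, O x -> O y -> (d x y = 0 <-> x = y)) /\
  (forall x y, O x -> O y -> d x y = d y x) /\
  (forall x y z, O x -> O y -> O z -> d x z <= d x y + d y z).

Definition d_continuous (O : pt -> Prop) (d : pt -> pt -> R) : Prop :=
  forall x y, O x -> O y -> forall eps, 0 < eps -> exists delta, 0 < delta /\
    forall x' y', O x' -> O y' -> edist x x' < delta -> edist y y' < delta ->
      Rabs (d x' y' - d x y) < eps.

Definition ndiff_on (n : nat) (f : R -> R) (a b : R) : Prop :=
  exists F : nat -> R -> R,
    (forall t, a < t < b -> F O t = f t) /\
    (forall k, (k < n)%nat -> forall t, a < t < b ->
       derivable_pt_lim (F k) t (F (S k) t)).

Definition Cn_path (n : nat) (O : pt -> Prop) (g : R -> pt) (x y : pt) : Prop :=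
  (forall t, 0 <= t <= 1 -> O (g t)) /\
  (forall t, 0 <= t <= 1 -> forall eps, 0 < eps -> exists delta, 0 < delta /\
     forall s, 0 <= s <= 1 -> Rabs (s - t) < delta -> edist (g t) (g s) < eps) /\
  ndiff_on n (fun t => fst (g t)) 0 1 /\
  ndiff_on n (fun t => snd (g t)) 0 1 /\
  g 0 = x /\ g 1 = y.

Inductive pw_path (n : nat) (O : pt -> Prop) : pt -> pt -> list (R -> pt) -> Prop :=
  | pw_one : forall g x y, Cn_path n O g x y -> pw_path n O x y (g :: nil)
  | pw_cons : forall g l x z y, Cn_path n O g x z -> pw_path n O z y l ->
              pw_path n O x y (g :: l).

Definition partition (t : nat -> R) (k : nat) : Prop :=
  t O = 0 /\ t k = 1 /\ forall j, (j < k)%nat -> t j < t (S j).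

Fixpoint psum (d : pt -> pt -> R) (g : R -> pt) (t : nat -> R) (k : nat) : R :=
  match k with
  | O => 0
  | S j => psum d g t j + d (g (t j)) (g (t (S j)))
  end.

(* L_d(g) <= M, where L_d(g) is the sup over partitions of the sums *)
Definition length_le (d : pt -> pt -> R) (g : R -> pt) (M : R) : Prop :=
  forall t k, partition t k -> psum d g t k <= M.

(* length of a concatenation (sum of the lengths of the pieces) is <= M *)
Fixpoint pw_length_le (d : pt -> pt -> R) (l : list (R -> pt)) (M : R) : Prop :=
  match l with
  | nil => 0 <= M
  | g :: r => exists m, length_le d g m /\ pw_length_le d r (M - m)
  end.

(* d is inner: d = d^i, i.e. (since d <= d^i always) for all x,y in O,
   inf { L_d(g) : g piecewise C^n from x to y } <= d x y. *)
Definition inner (n : nat) (O : pt -> Prop) (d : pt -> pt -> R) : Prop :=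
  forall x y, O x -> O y -> forall eps, 0 < eps ->
    exists l, pw_path n O x y l /\ pw_length_le d l (d x y + eps).

Definition d_open (O : pt -> Prop) (d : pt -> pt -> R) (U : pt -> Prop) : Prop :=
  forall x, U x -> exists r, 0 < r /\ forall y, O y -> d x y < r -> U y.

Definition e_open_in (O : pt -> Prop) (U : pt -> Prop) : Prop :=
  forall x, U x -> exists r, 0 < r /\ forall y, O y -> edist x y < r -> U y.

From Pilot Require Import Defs.
From Stdlib Require Import Reals List Lra Lia.
Open Scope R_scope.

(* Continuity of [d] at the diagonal makes every [d]-ball a Euclidean
   neighbourhood.  Conversely, fix [x] and a closed max-norm square of radius
   [rho] around [x] inside the domain.  Its boundary is compact and avoids [x],
   so the continuous function [d x] has a positive minimum [m] on it.  If
   [d x y < m], a piecewise path from [x] to [y] of [d]-length less than [m]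
   exists since [d] is inner; were [y] outside the square, the path would cross
   its boundary at some [z] (intermediate value theorem), and the length bound
   gives [d x z < m], a contradiction.  Hence the [d]-ball of radius [m] lies in
   the square. *)

Lemma edist_refl (p : pt) : edist p p = 0.
Proof.
  unfold edist. replace ((fst p - fst p) ^ 2 + (snd p - snd p) ^ 2) with 0 by ring.
  exact sqrt_0.
Qed.

Lemma edist_sym (p q : pt) : edist p q = edist q p.
Proof. unfold edist. f_equal. ring. Qed.

Lemma Rabs_fst_le_edist (p q : pt) : Rabs (fst p - fst q) <= edist p q.
Proof.
  unfold edist. rewrite <- sqrt_Rsqr_abs. apply sqrt_le_1_alt.
  unfold Rsqr. pose proof (pow2_ge_0 (snd p - snd q)). nra.
Qed.

Lemma Rabs_snd_le_edist (p q : pt) : Rabs (snd p - snd q) <= edist p q.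
Proof.
  unfold edist. rewrite <- sqrt_Rsqr_abs. apply sqrt_le_1_alt.
  unfold Rsqr. pose proof (pow2_ge_0 (fst p - fst q)). nra.
Qed.

Lemma edist_le_Rabs_add (p q : pt) :
  edist p q <= Rabs (fst p - fst q) + Rabs (snd p - snd q).
Proof.
  unfold edist. set (a := fst p - fst q). set (b := snd p - snd q).
  pose proof (Rabs_pos a); pose proof (Rabs_pos b).
  rewrite <- (sqrt_square (Rabs a + Rabs b)) by lra.
  apply sqrt_le_1_alt.
  rewrite <- (pow2_abs a), <- (pow2_abs b). nra.
Qed.

Definition maxdist (p q : pt) : R :=
  Rmax (Rabs (fst p - fst q)) (Rabs (snd p - snd q)).

Lemma maxdist_refl (p : pt) : maxdist p p = 0.
Proof. unfold maxdist. rewrite !Rminus_diag, Rabs_R0. apply Rmax_left; lra. Qed.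

Lemma maxdist_lipschitz (x p q : pt) : Rabs (maxdist x p - maxdist x q) <= edist p q.
Proof.
  pose proof (Rabs_fst_le_edist p q); pose proof (Rabs_snd_le_edist p q).
  revert H H0; unfold maxdist.
  destruct x as [x1 x2], p as [p1 p2], q as [q1 q2]; simpl; intros.
  unfold Rmax in *; repeat destruct Rle_dec; unfold Rabs in *;
    repeat destruct Rcase_abs; lra.
Qed.

Lemma edist_le_2maxdist (p q : pt) : edist p q <= 2 * maxdist p q.
Proof.
  pose proof (edist_le_Rabs_add p q). unfold maxdist.
  pose proof (Rmax_l (Rabs (fst p - fst q)) (Rabs (snd p - snd q))).
  pose proof (Rmax_r (Rabs (fst p - fst q)) (Rabs (snd p - snd q))). lra.
Qed.

Definition vside (x : pt) (c s : R) : pt := (fst x + c, snd x + s).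
Definition hside (x : pt) (c s : R) : pt := (fst x + s, snd x + c).

Lemma edist_vside (x : pt) (c s t : R) : edist (vside x c s) (vside x c t) <= Rabs (s - t).
Proof.
  eapply Rle_trans; [apply edist_le_Rabs_add|]; simpl.
  replace (fst x + c - (fst x + c)) with 0 by ring.
  replace (snd x + s - (snd x + t)) with (s - t) by ring.
  rewrite Rabs_R0; lra.
Qed.

Lemma edist_hside (x : pt) (c s t : R) : edist (hside x c s) (hside x c t) <= Rabs (s - t).
Proof.
  eapply Rle_trans; [apply edist_le_Rabs_add|]; simpl.
  replace (snd x + c - (snd x + c)) with 0 by ring.
  replace (fst x + s - (fst x + t)) with (s - t) by ring.
  rewrite Rabs_R0; lra.
Qed.

Lemma maxdist_vside (x : pt) (c s : R) : maxdist x (vside x c s) = Rmax (Rabs c) (Rabs s).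
Proof.
  unfold maxdist, vside; simpl.
  replace (fst x - (fst x + c)) with (- c) by ring.
  replace (snd x - (snd x + s)) with (- s) by ring.
  now rewrite !Rabs_Ropp.
Qed.

Lemma maxdist_hside (x : pt) (c s : R) : maxdist x (hside x c s) = Rmax (Rabs s) (Rabs c).
Proof.
  unfold maxdist, hside; simpl.
  replace (fst x - (fst x + s)) with (- s) by ring.
  replace (snd x - (snd x + c)) with (- c) by ring.
  now rewrite !Rabs_Ropp.
Qed.

Lemma Rmax_Rabs_eq (rho c s : R) :
  Rabs c = rho -> -rho <= s <= rho -> Rmax (Rabs c) (Rabs s) = rho.
Proof. intros Hc Hs. rewrite Hc. apply Rmax_left. apply Rabs_le. lra. Qed.

Lemma maxdist_eq_sides (x z : pt) (rho : R) : maxdist x z = rho ->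
  exists c s, (c = rho \/ c = - rho) /\ -rho <= s <= rho /\
    (z = vside x c s \/ z = hside x c s).
Proof.
  destruct z as [z1 z2]; unfold maxdist, vside, hside; simpl.
  unfold Rmax, Rabs; destruct Rle_dec; repeat destruct Rcase_abs; intros Hz.
  all: first
    [ exists (z1 - fst x), (z2 - snd x); split; [lra|]; split; [lra|];
      left; f_equal; ring
    | exists (z2 - snd x), (z1 - fst x); split; [lra|]; split; [lra|];
      right; f_equal; ring ].
Qed.

Definition clamp (a b t : R) : R := Rmax a (Rmin b t).

Lemma clamp_in (a b t : R) : a <= b -> a <= clamp a b t <= b.
Proof. intros. unfold clamp, Rmax, Rmin; repeat destruct Rle_dec; lra. Qed.

Lemma clamp_id (a b t : R) : a <= t <= b -> clamp a b t = t.
Proof. intros. unfold clamp, Rmax, Rmin; repeat destruct Rle_dec; lra. Qed.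

Lemma clamp_lipschitz (a b t s : R) :
  a <= b -> Rabs (clamp a b t - clamp a b s) <= Rabs (t - s).
Proof.
  intros. unfold clamp, Rmax, Rmin; repeat destruct Rle_dec;
    unfold Rabs; repeat destruct Rcase_abs; lra.
Qed.

Lemma continuity_clamp (f : R -> R) (a b : R) : a <= b ->
  (forall t, a <= t <= b -> forall eps, 0 < eps -> exists delta, 0 < delta /\
     forall s, a <= s <= b -> Rabs (s - t) < delta -> Rabs (f s - f t) < eps) ->
  continuity (fun t => f (clamp a b t)).
Proof.
  intros Hab Hf t eps Heps.
  destruct (Hf (clamp a b t) (clamp_in a b t Hab) eps Heps) as [delta [Hdelta Hclose]].
  exists delta; split; [lra|].
  intros s [_ Hs]; simpl in *; unfold R_dist in *.
  apply Hclose; [now apply clamp_in|].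
  eapply Rle_lt_trans; [apply clamp_lipschitz|]; assumption.
Qed.

Section BoundaryMinimum.

Variables (O : pt -> Prop) (d : pt -> pt -> R).
Hypothesis d_distance : is_distance O d.
Hypothesis d_cont : d_continuous O d.

Lemma side_min (x : pt) (rho : R) (p : R -> pt) :
  O x -> 0 < rho -> (forall q, maxdist x q <= rho -> O q) ->
  (forall s t, edist (p s) (p t) <= Rabs (s - t)) ->
  (forall s, -rho <= s <= rho -> maxdist x (p s) = rho) ->
  exists m, 0 < m /\ forall s, -rho <= s <= rho -> m <= d x (p s).
Proof.
  intros Ox Hrho Hsquare Hp Hside.
  assert (Op : forall s, -rho <= s <= rho -> O (p s))
    by (intros s Hs; apply Hsquare; rewrite Hside by exact Hs; lra).
  set (phi := fun s => d x (p (clamp (-rho) rho s))).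
  assert (phi_cont : continuity phi).
  { apply (continuity_clamp (fun s => d x (p s))); [lra|].
    intros t Ht eps Heps.
    destruct (d_cont x (p t) Ox (Op t Ht) eps Heps) as [delta [Hdelta Hclose]].
    exists delta; split; [exact Hdelta|]. intros s Hs Hst.
    apply Hclose; auto; [rewrite edist_refl; exact Hdelta|].
    eapply Rle_lt_trans; [apply Hp|]. now rewrite Rabs_minus_sym. }
  destruct (continuity_ab_min phi (-rho) rho ltac:(lra) (fun c _ => phi_cont c))
    as [s0 [Hmin Hs0]].
  exists (phi s0); unfold phi in *; rewrite clamp_id in * by exact Hs0; split.
  - destruct d_distance as [Hpos [Hzero _]].
    destruct (Rle_lt_or_eq_dec _ _ (Hpos x (p s0) Ox (Op s0 Hs0))) as [|E]; auto.
    symmetry in E; apply (Hzero _ _ Ox (Op s0 Hs0)) in E.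
    specialize (Hside s0 Hs0). rewrite <- E, maxdist_refl in Hside. lra.
  - intros s Hs. specialize (Hmin s Hs). now rewrite clamp_id in Hmin.
Qed.

Lemma square_boundary_min (x : pt) (rho : R) :
  O x -> 0 < rho -> (forall q, maxdist x q <= rho -> O q) ->
  exists m, 0 < m /\ forall z, maxdist x z = rho -> m <= d x z.
Proof.
  intros Ox Hrho Hsquare.
  assert (Hplus : Rabs rho = rho) by (apply Rabs_pos_eq; lra).
  assert (Hminus : Rabs (- rho) = rho) by (rewrite Rabs_Ropp; exact Hplus).
  destruct (side_min x rho (vside x rho) Ox Hrho Hsquare (edist_vside x rho))
    as [m1 [Hm1 H1]].
  { intros s Hs; rewrite maxdist_vside; now apply Rmax_Rabs_eq. }
  destruct (side_min x rho (vside x (- rho)) Ox Hrho Hsquare (edist_vside x (- rho)))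
    as [m2 [Hm2 H2]].
  { intros s Hs; rewrite maxdist_vside; now apply Rmax_Rabs_eq. }
  destruct (side_min x rho (hside x rho) Ox Hrho Hsquare (edist_hside x rho))
    as [m3 [Hm3 H3]].
  { intros s Hs; rewrite maxdist_hside, Rmax_comm; now apply Rmax_Rabs_eq. }
  destruct (side_min x rho (hside x (- rho)) Ox Hrho Hsquare (edist_hside x (- rho)))
    as [m4 [Hm4 H4]].
  { intros s Hs; rewrite maxdist_hside, Rmax_comm; now apply Rmax_Rabs_eq. }
  exists (Rmin (Rmin m1 m2) (Rmin m3 m4)); split.
  { unfold Rmin; repeat destruct Rle_dec; lra. }
  intros z Hz.
  destruct (maxdist_eq_sides x z rho Hz) as [c [s [[-> | ->] [Hs [-> | ->]]]]].
  all: pose proof (Rmin_l (Rmin m1 m2) (Rmin m3 m4));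
       pose proof (Rmin_r (Rmin m1 m2) (Rmin m3 m4));
       pose proof (Rmin_l m1 m2); pose proof (Rmin_r m1 m2);
       pose proof (Rmin_l m3 m4); pose proof (Rmin_r m3 m4).
  - specialize (H1 s Hs); lra.
  - specialize (H3 s Hs); lra.
  - specialize (H2 s Hs); lra.
  - specialize (H4 s Hs); lra.
Qed.

End BoundaryMinimum.

Definition split_at (t : R) (j : nat) : R :=
  match j with O => 0 | 1%nat => t | _ => 1 end.

Lemma partition_split_at_1 : Defs.partition (split_at 1) 1.
Proof. repeat split; intros j Hj; destruct j; simpl; [lra | lia]. Qed.

Lemma partition_split_at (t : R) : 0 < t < 1 -> Defs.partition (split_at t) 2.
Proof.
  intros Ht; repeat split; intros j Hj.
  destruct j as [|[|j]]; simpl; [lra | lra | lia].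
Qed.

Section Paths.

Variables (n : nat) (O : pt -> Prop) (d : pt -> pt -> R).
Hypothesis d_distance : is_distance O d.

Lemma Cn_path_in (g : R -> pt) (a w : pt) :
  Cn_path n O g a w -> O a /\ O w.
Proof.
  intros [HO [_ [_ [_ [<- <-]]]]]; split; apply HO; lra.
Qed.

Lemma pw_path_in (a y : pt) (l : list (R -> pt)) :
  pw_path n O a y l -> O a /\ O y.
Proof.
  induction 1 as [g a y Hg | g l a z y Hg _ [_ Oy]]; [exact (Cn_path_in _ _ _ Hg)|].
  split; [exact (proj1 (Cn_path_in _ _ _ Hg)) | exact Oy].
Qed.

Lemma Cn_path_ends_dist_le (g : R -> pt) (a w : pt) (m : R) :
  Cn_path n O g a w -> length_le d g m -> d a w <= m.
Proof.
  intros [_ [_ [_ [_ [Hg0 Hg1]]]]] Hlen.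
  pose proof (Hlen _ _ partition_split_at_1) as H; simpl in H.
  rewrite Hg0, Hg1 in H; lra.
Qed.

Lemma Cn_path_dist_le (g : R -> pt) (a w : pt) (m t : R) :
  Cn_path n O g a w -> length_le d g m -> 0 <= t <= 1 -> d a (g t) <= m.
Proof.
  intros Hg Hlen Ht.
  pose proof (Cn_path_ends_dist_le g a w m Hg Hlen) as Haw.
  destruct (Cn_path_in g a w Hg) as [Oa Ow].
  destruct Hg as [HO [_ [_ [_ [Hg0 Hg1]]]]].
  destruct d_distance as [Hpos [Hzero _]].
  destruct (Req_dec t 0) as [-> | Ht0]; [|destruct (Req_dec t 1) as [-> | Ht1]].
  - rewrite Hg0, (proj2 (Hzero a a Oa Oa) eq_refl). pose proof (Hpos a w Oa Ow); lra.
  - now rewrite Hg1.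
  - pose proof (Hlen _ _ (partition_split_at t ltac:(lra))) as H; simpl in H.
    rewrite Hg0, Hg1 in H. pose proof (Hpos (g t) w (HO t Ht) Ow); lra.
Qed.

Lemma pw_path_dist_le (a y : pt) (l : list (R -> pt)) (M : R) :
  pw_path n O a y l -> pw_length_le d l M -> d a y <= M.
Proof.
  intros Hpath; revert M.
  induction Hpath as [g a y Hg | g l a z y Hg Hpath IH]; intros M [m [Hm HM]].
  - pose proof (Cn_path_ends_dist_le g a y m Hg Hm). simpl in HM; lra.
  - pose proof (Cn_path_ends_dist_le g a z m Hg Hm).
    destruct (Cn_path_in _ _ _ Hg) as [Oa Oz]; destruct (pw_path_in _ _ _ Hpath) as [_ Oy].
    specialize (IH _ HM).
    destruct d_distance as [_ [_ [_ Htri]]]. pose proof (Htri a z y Oa Oz Oy); lra.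
Qed.

Lemma Cn_path_crossing (x : pt) (rho : R) (g : R -> pt) (a w : pt) (m : R) :
  Cn_path n O g a w -> length_le d g m -> maxdist x a <= rho <= maxdist x w ->
  exists z, O z /\ maxdist x z = rho /\ d a z <= m.
Proof.
  intros Hg Hlen [Ha Hw].
  pose proof Hg as [HO [Hcont [_ [_ [Hg0 Hg1]]]]].
  set (f := fun t => maxdist x (g (clamp 0 1 t)) - rho).
  assert (f_cont : continuity f).
  { apply continuity_minus; [|apply continuity_const; intros ? ?; reflexivity].
    apply (continuity_clamp (fun t => maxdist x (g t))); [lra|].
    intros t Ht eps Heps.
    destruct (Hcont t Ht eps Heps) as [delta [Hdelta Hclose]].
    exists delta; split; [exact Hdelta|]; intros s Hs Hst.
    eapply Rle_lt_trans; [apply maxdist_lipschitz|].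
    rewrite edist_sym; exact (Hclose s Hs Hst). }
  assert (f_sign : f 0 * f 1 <= 0).
  { unfold f; rewrite !clamp_id, Hg0, Hg1 by lra.
    nra. }
  destruct (IVT_cor f 0 1 f_cont ltac:(lra) f_sign) as [t [Ht Hft]].
  unfold f in Hft; rewrite clamp_id in Hft by exact Ht.
  exists (g t); split; [now apply HO|]; split; [lra|].
  exact (Cn_path_dist_le g a w m t Hg Hlen Ht).
Qed.

Lemma pw_path_crossing (x : pt) (rho : R) (a y : pt) (l : list (R -> pt)) (M : R) :
  pw_path n O a y l -> pw_length_le d l M -> maxdist x a <= rho <= maxdist x y ->
  exists z, O z /\ maxdist x z = rho /\ d a z <= M.
Proof.
  intros Hpath; revert M.
  induction Hpath as [g a y Hg | g l a z y Hg Hpath IH]; intros M [m [Hm HM]] Hrho.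
  - destruct (Cn_path_crossing x rho g a y m Hg Hm Hrho) as [w [Ow [Hw Hdw]]].
    exists w; simpl in HM; repeat split; auto; lra.
  - destruct (Cn_path_in _ _ _ Hg) as [Oa Oz].
    destruct d_distance as [Hpos [_ [_ Htri]]].
    destruct (Rle_or_lt rho (maxdist x z)) as [Hz | Hz].
    + destruct (Cn_path_crossing x rho g a z m Hg Hm (conj (proj1 Hrho) Hz))
        as [w [Ow [Hw Hdw]]].
      pose proof (pw_path_dist_le z y l _ Hpath HM).
      pose proof (Hpos z y Oz (proj2 (pw_path_in _ _ _ Hpath))).
      exists w; repeat split; auto; lra.
    + destruct (IH _ HM (conj (Rlt_le _ _ Hz) (proj2 Hrho))) as [w [Ow [Hw Hdw]]].
      pose proof (Cn_path_ends_dist_le g a z m Hg Hm).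
      pose proof (Htri a z w Oa Oz Ow).
      exists w; repeat split; auto; lra.
Qed.

Lemma inner_dist_lt_in_square (x y : pt) (rho m : R) :
  inner n O d -> O x -> O y -> 0 < rho ->
  (forall z, maxdist x z = rho -> m <= d x z) -> d x y < m -> maxdist x y < rho.
Proof.
  intros Hinner Ox Oy Hrho Hboundary Hxy.
  destruct (Rlt_or_le (maxdist x y) rho) as [| Hy]; [assumption | exfalso].
  destruct (Hinner x y Ox Oy ((m - d x y) / 2) ltac:(lra)) as [l [Hpath Hlen]].
  assert (Hx : maxdist x x <= rho) by (rewrite maxdist_refl; lra).
  destruct (pw_path_crossing x rho x y l _ Hpath Hlen (conj Hx Hy)) as [z [_ [Hz Hdz]]].
  specialize (Hboundary z Hz); lra.
Qed.

End Paths.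

Lemma d_open_e_open_in (O : pt -> Prop) (d : pt -> pt -> R) (U : pt -> Prop) :
  is_distance O d -> d_continuous O d -> (forall x, U x -> O x) ->
  d_open O d U -> e_open_in O U.
Proof.
  intros [_ [Hzero _]] Hcont HU Hopen x Ux.
  pose proof (HU x Ux) as Ox.
  destruct (Hopen x Ux) as [r [Hr Hball]].
  destruct (Hcont x x Ox Ox r Hr) as [delta [Hdelta Hclose]].
  exists delta; split; [exact Hdelta|]; intros y Oy Hxy.
  apply Hball; [exact Oy|].
  specialize (Hclose x y Ox Oy ltac:(rewrite edist_refl; exact Hdelta) Hxy).
  rewrite (proj2 (Hzero x x Ox Ox) eq_refl), Rminus_0_r in Hclose.
  eapply Rle_lt_trans; [apply RRle_abs | exact Hclose].
Qed.

Lemma e_open_in_d_open (n : nat) (O : pt -> Prop) (d : pt -> pt -> R) (U : pt -> Prop) :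
  eopen O -> is_distance O d -> d_continuous O d -> inner n O d ->
  (forall x, U x -> O x) -> e_open_in O U -> d_open O d U.
Proof.
  intros HO Hd Hcont Hinner HU Hopen x Ux.
  pose proof (HU x Ux) as Ox.
  destruct (Hopen x Ux) as [r [Hr Hball]].
  destruct (HO x Ox) as [r0 [Hr0 HOball]].
  set (rho := Rmin r r0 / 4).
  assert (Hrho : 0 < rho /\ 2 * rho < r /\ 2 * rho < r0)
    by (unfold rho, Rmin; destruct Rle_dec; lra).
  assert (Hsquare : forall q, maxdist x q <= rho -> O q)
    by (intros q Hq; apply HOball; pose proof (edist_le_2maxdist x q); lra).
  destruct (square_boundary_min O d Hd Hcont x rho Ox (proj1 Hrho) Hsquare)
    as [m [Hm Hboundary]].
  exists m; split; [exact Hm|]; intros y Oy Hxy.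
  pose proof (inner_dist_lt_in_square n O d Hd x y rho m Hinner Ox Oy
    (proj1 Hrho) Hboundary Hxy).
  apply Hball; [exact Oy|]. pose proof (edist_le_2maxdist x y); lra.
Qed.

Theorem mainTheorem3 (n : nat) (O : pt -> Prop) (d : pt -> pt -> R) :
  domain O -> is_distance O d -> d_continuous O d -> inner n O d ->
  forall U : pt -> Prop, (forall x, U x -> O x) ->
    (d_open O d U <-> e_open_in O U).
Proof.
  intros [_ [HO _]] Hd Hcont Hinner U HU; split.
  - exact (d_open_e_open_in O d U Hd Hcont HU).
  - exact (e_open_in_d_open n O d U HO Hd Hcont Hinner HU).
Qed.
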